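(* Let $\mathbf A,\mathbf B\in\mathsf{ICM}$. Every ring homomorphism $h:\mathbf A^-\to\mathbf B^-$ is also a homomorphism $h:\mathbf A\to\mathbf B$ of implicitly closed meadows, i.e. it also satisfies $h(a^* )=h(a)^*$ and $h(r_p(a))=r_p(h(a))$ for all $a\in A$ and all primes $p$.
   Context: A field is weakly rooted if it has characteristic $0$, or prime characteristic $p$ with every element having a $p$-th root. Weak inverse: $a^*=a^{-1}$ if $a\ne0$, $0^*=0$; weak $p$-root: $r_p(a)=\sqrt[p]{a}$ if the characteristic is $p$, else $0$. An implicitly closed field is a weakly rooted field (ring language $\{+,\cdot,-,0,1\}$) expanded by $(\,)^*$ and all $r_p$; $\mathsf{ICM}$ is the class of algebras isomorphic to subalgebras of direct products of implicitly closed fields. $\mathbf A^-$ denotes the ring reduct of $\mathbf A$. *)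

From HB Require Import structures.
From mathcomp Require Import all_boot all_algebra.
Set Implicit Arguments. Unset Strict Implicit. Unset Printing Implicit Defensive.
Import GRing.Theory.
Local Open Scope ring_scope.

(* The root operations are indexed by nat; only prime indices are symbols
   of the signature (non-prime indices are ignored everywhere). *)
Record ICAlg := {
  car :> Type;
  alg_add : car -> car -> car;
  alg_mul : car -> car -> car;
  alg_opp : car -> car;
  alg_zero : car;
  alg_one : car;
  alg_winv : car -> car;
  alg_root : nat -> car -> car }.

Definition ring_hom (A B : ICAlg) (h : A -> B) : Prop :=
  (forall x y, h (alg_add x y) = alg_add (h x) (h y)) /\
  (forall x y, h (alg_mul x y) = alg_mul (h x) (h y)) /\
  (forall x, h (alg_opp x) = alg_opp (h x)) /\
  h (alg_zero A) = alg_zero B /\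
  h (alg_one A) = alg_one B.

Definition ic_hom (A B : ICAlg) (h : A -> B) : Prop :=
  ring_hom h /\
  (forall x, h (alg_winv x) = alg_winv (h x)) /\
  (forall p, prime p -> forall x, h (alg_root p x) = alg_root p (h x)).

Definition weakly_rooted (F : fieldType) : Prop :=
  [pchar F] =i pred0 \/
  exists2 p, p \in [pchar F] & forall a : F, exists b : F, b ^+ p = a.

(* An implicitly closed field: a weakly rooted field together with its
   weak p-roots r_p (r_p a = the p-th root of a in characteristic p, else 0;
   the p-th root is unique in characteristic p, so r_p is determined). *)
Record ICField := {
  icF :> fieldType;
  icF_wr : weakly_rooted icF;
  icR : nat -> icF -> icF;
  icR_spec : forall p, prime p -> forall a : icF,
      if p \in [pchar icF] then icR p a ^+ p = a else icR p a = 0 }.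

(* the implicitly closed field as an algebra; weak inverse = GRing.inv (0^-1 = 0) *)
Definition ICField_alg (F : ICField) : ICAlg :=
  {| car := F; alg_add := +%R; alg_mul := *%R; alg_opp := -%R;
     alg_zero := 0; alg_one := 1; alg_winv := GRing.inv; alg_root := @icR F |}.

Definition prod_alg (I : Type) (F : I -> ICField) : ICAlg :=
  {| car := forall i, F i;
     alg_add := fun x y i => x i + y i;
     alg_mul := fun x y i => x i * y i;
     alg_opp := fun x i => - x i;
     alg_zero := fun _ => 0;
     alg_one := fun _ => 1;
     alg_winv := fun x i => (x i)^-1;
     alg_root := fun p x i => @icR (F i) p (x i) |}.

(* ICM: isomorphic to a subalgebra of a direct product of implicitly closed
   fields, i.e. embeddable by an injective homomorphism into such a product *)
Definition ICM (A : ICAlg) : Prop :=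
  exists (I : Type) (F : I -> ICField) (e : A -> prod_alg F),
    injective e /\ ic_hom e.

From mathcomp Require Import all_boot all_algebra.
From Stdlib Require Import FunctionalExtensionality.
Set Implicit Arguments. Unset Strict Implicit.
Import GRing.Theory.
Local Open Scope ring_scope.

(* In an implicitly closed field the weak inverse and the weak p-roots are
   implicitly defined by equations in the ring operations alone:
     x = a^*     iff  a a x = a  and  x x a = x,
     x = r_p(a)  iff  p x = 0    and  (1 - p p^* ) (x^p - a) = 0.
   These equations are checked coordinatewise, so they characterise ( )^* and
   r_p in every member of ICM, and they are preserved by ring homomorphisms
   (the second one once ( )^* is known to be preserved). *)

Section Terms.
Variable A : ICAlg.

Fixpoint alg_nat (n : nat) : A :=
  if n is n'.+1 then alg_add (alg_one A) (alg_nat n') else alg_zero A.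

Fixpoint alg_exp (x : A) (n : nat) : A :=
  if n is n'.+1 then alg_mul x (alg_exp x n') else alg_one A.

Definition is_winv (a x : A) : Prop :=
  alg_mul (alg_mul a a) x = a /\ alg_mul (alg_mul x x) a = x.

Definition is_wroot (p : nat) (a x : A) : Prop :=
  alg_mul (alg_nat p) x = alg_zero A /\
  alg_mul (alg_add (alg_one A) (alg_opp (alg_mul (alg_nat p) (alg_winv (alg_nat p)))))
          (alg_add (alg_exp x p) (alg_opp a)) = alg_zero A.

End Terms.

Section RingHom.
Variables (A B : ICAlg) (h : A -> B).
Hypothesis hh : ring_hom h.

Lemma ring_hom_nat n : h (alg_nat A n) = alg_nat B n.
Proof. by case: hh => ha [_ [_ [h0 h1]]]; elim: n => //= n IH; rewrite ha h1 IH. Qed.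

Lemma ring_hom_exp x n : h (alg_exp x n) = alg_exp (h x) n.
Proof. by case: hh => _ [hm [_ [_ h1]]]; elim: n => //= n IH; rewrite hm IH. Qed.

Lemma ring_hom_winv_rel a x : is_winv a x -> is_winv (h a) (h x).
Proof. by case: hh => _ [hm _] [e1 e2]; split; rewrite -!hm ?e1 ?e2. Qed.

Lemma inj_ring_hom_winv_rel a x : injective h -> is_winv (h a) (h x) -> is_winv a x.
Proof. by case: hh => _ [hm _] hinj [e1 e2]; split; apply: hinj; rewrite !hm. Qed.

Hypothesis h_winv : forall x, h (alg_winv x) = alg_winv (h x).

Lemma ring_hom_wroot_rel p a x : is_wroot p a x -> is_wroot p (h a) (h x).
Proof.
case: hh => ha [hm [ho [h0 h1]]] [e1 e2].
by split; [rewrite -h0 -e1 | rewrite -h0 -e2];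
  rewrite !(hm, ha, ho, h1, h_winv, ring_hom_nat, ring_hom_exp).
Qed.

Lemma inj_ring_hom_wroot_rel p a x :
  injective h -> is_wroot p (h a) (h x) -> is_wroot p a x.
Proof.
case: hh => ha [hm [ho [h0 h1]]] hinj [e1 e2].
by split; apply: hinj; [rewrite h0 -e1 | rewrite h0 -e2];
  rewrite !(hm, ha, ho, h1, h_winv, ring_hom_nat, ring_hom_exp).
Qed.

End RingHom.

Lemma winv_fieldP (F : fieldType) (a x : F) :
  a * a * x = a /\ x * x * a = x <-> x = a^-1.
Proof.
have [-> | a0] := eqVneq a 0.
  by rewrite invr0 mulr0; split=> [[_ <-] | ->]; rewrite !mulr0.
split=> [[e1 _] | ->]; last by rewrite -!mulrA mulfV // mulVf // !mulr1.
by apply: (mulfI a0); rewrite mulfV //; apply: (mulfI a0); rewrite mulr1 mulrA.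
Qed.

Lemma wroot_fieldP (F : ICField) p : prime p -> forall a x : F,
  p%:R * x = 0 /\ (1 - p%:R * p%:R^-1) * (x ^+ p - a) = 0 <-> x = icR p a.
Proof.
(* In characteristic p the factor 1 - p p^-1 is 1 and Frobenius is injective;
   otherwise that factor is 0 and p is invertible, forcing x = 0. *)
move=> pp a x; have := icR_spec pp a; case: ifP => [pcharFp rpa | pcharFpN ->].
  rewrite (pcharf0 pcharFp) mul0r invr0 mulr0 subr0 mul1r.
  have frob_inj := fmorph_inj (pFrobenius_aut pcharFp).
  split=> [[_ /eqP]| ->]; last by rewrite rpa subrr.
  rewrite subr_eq0 => /eqP xpa.
  by apply: frob_inj; rewrite /= !pFrobenius_autE xpa rpa.
have p0 : p%:R != 0 :> F by apply: contraFN pcharFpN => p0; rewrite inE pp.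
rewrite mulfV // subrr mul0r.
by split=> [[/eqP] | ->]; rewrite ?mulr0 // mulf_eq0 (negbTE p0) => /eqP.
Qed.

Section Product.
Variables (I : Type) (F : I -> ICField).

Lemma prod_alg_nat n i : alg_nat (prod_alg F) n i = n%:R.
Proof. by elim: n => //= n ->; rewrite mulrS. Qed.

Lemma prod_alg_exp (u : prod_alg F) n i : alg_exp u n i = u i ^+ n.
Proof. by elim: n => //= n ->; rewrite exprS. Qed.

Lemma prod_alg_ext (u v : prod_alg F) : (forall i, u i = v i) -> u = v.
Proof. exact: functional_extensionality_dep. Qed.

Lemma prod_winvP (u v : prod_alg F) : is_winv u v <-> v = alg_winv u.
Proof.
split=> [[e1 e2] | ->].
  apply: prod_alg_ext => i; apply/winv_fieldP.
  by move: (congr1 (fun f : prod_alg F => f i) e1) (congr1 (fun f : prod_alg F => f i) e2).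
by split; apply: prod_alg_ext => i; have [] := (winv_fieldP (u i) (u i)^-1).2 erefl.
Qed.

Lemma prod_wrootP p : prime p ->
  forall u v : prod_alg F, is_wroot p u v <-> v = alg_root p u.
Proof.
move=> pp u v; split=> [[e1 e2] | ->].
  apply: prod_alg_ext => i; apply/wroot_fieldP => //.
  move: (congr1 (fun f : prod_alg F => f i) e1) (congr1 (fun f : prod_alg F => f i) e2) => /=.
  by rewrite !prod_alg_nat prod_alg_exp.
by split; apply: prod_alg_ext => i /=; rewrite !prod_alg_nat ?prod_alg_exp;
  have [] := (wroot_fieldP pp (u i) _).2 erefl.
Qed.

End Product.

Lemma ICM_winvP (A : ICAlg) : ICM A -> forall a x : A, is_winv a x <-> x = alg_winv a.
Proof.
case=> I [F [e [einj [ehom [ewinv _]]]]] a x.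
split=> [/(ring_hom_winv_rel ehom)/prod_winvP | ->].
  by rewrite -ewinv => /einj.
by apply: (inj_ring_hom_winv_rel ehom einj); apply/prod_winvP; rewrite ewinv.
Qed.

Lemma ICM_wrootP (A : ICAlg) : ICM A ->
  forall p, prime p -> forall a x : A, is_wroot p a x <-> x = alg_root p a.
Proof.
case=> I [F [e [einj [ehom [ewinv eroot]]]]] p pp a x.
split=> [/(ring_hom_wroot_rel ehom ewinv)/(prod_wrootP pp) | ->].
  by rewrite -eroot // => /einj.
by apply: (inj_ring_hom_wroot_rel ehom ewinv einj); apply/(prod_wrootP pp); rewrite eroot.
Qed.

Theorem mainTheorem17 (A B : ICAlg) (hA : ICM A) (hB : ICM B) (h : A -> B) :
  ring_hom h -> ic_hom h.
Proof.
move=> hh.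
have h_winv x : h (alg_winv x) = alg_winv (h x).
  by apply/(ICM_winvP hB)/(ring_hom_winv_rel hh)/(ICM_winvP hA).
split=> //; split=> // p pp x.
by apply/(ICM_wrootP hB pp)/(ring_hom_wroot_rel hh h_winv)/(ICM_wrootP hA pp).
Qed.
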